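(* Let $\mathcal{E}\in(0,1)$. If $v\in L^\infty(\mathbb{R})\cap H^2_{\rm loc}(\mathbb{R})$ satisfies $L_-v=0$, then $v=Cu_0$ for some constant $C$. Moreover, there exists a unique even $2T_0$-periodic function $V\in H^2_{\rm per}(0,2T_0)$ such that $L_-V=u_0'$.
   Context: For $\mathcal{E}\in(0,1)$, $u_0(x)=\sqrt{1-\mathcal{E}}\,\mathrm{sn}\big(x\sqrt{(1+\mathcal{E})/2},\,k\big)$ with $k=\sqrt{(1-\mathcal{E})/(1+\mathcal{E})}$ (Jacobi elliptic function of modulus $k$); it satisfies $u_0''+(1-u_0^2)u_0=0$ and has minimal period $2T_0$. $L_-v=-v''+(u_0^2-1)v$. *)

From Stdlib Require Import Reals Lra ClassicalEpsilon.
From Coquelicot Require Import Coquelicot.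
Open Scope R_scope.

Definition ellipF (k phi : R) : R :=
  RInt (fun t => / sqrt (1 - k ^ 2 * (sin t) ^ 2)) 0 phi.

(* Jacobi amplitude: the inverse of phi |-> F(phi,k) (a bijection R -> R for 0<=k<1). *)
Definition jacobi_am (k x : R) : R :=
  epsilon (inhabits 0) (fun phi => ellipF k phi = x).

Definition jacobi_sn (x k : R) : R := sin (jacobi_am k x).

Definition kmod (E : R) : R := sqrt ((1 - E) / (1 + E)).

Definition u0 (E x : R) : R :=
  sqrt (1 - E) * jacobi_sn (x * sqrt ((1 + E) / 2)) (kmod E).

Definition is_period (f : R -> R) (p : R) : Prop := forall x, f (x + p) = f x.

(* T0: u0 has minimal period 2 T0, i.e. T0 = (inf of positive periods)/2. *)
Definition T0 (E : R) : R :=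
  real (Glb_Rbar (fun p => 0 < p /\ is_period (u0 E) p)) / 2.

Definition Lminus_solves (E : R) (v f : R -> R) : Prop :=
  exists v1 v2 : R -> R,
    (forall x, is_derive v x (v1 x)) /\
    (forall x, is_derive v1 x (v2 x)) /\
    (forall x, - v2 x + ((u0 E x) ^ 2 - 1) * v x = f x).

Definition bounded_fun (v : R -> R) : Prop := exists M, forall x, Rabs (v x) <= M.

Definition even_fun (v : R -> R) : Prop := forall x, v (- x) = v x.

From Stdlib Require Import Reals Lra Lia Psatz Classical ClassicalEpsilon.
From Coquelicot Require Import Coquelicot.
Open Scope R_scope.

(* Write u = u0, so that u'' = (u^2 - 1) u, i.e. L_- u = 0.  Reduction of order gives a second
   solution w = u H - 2 u' of L_- w = 0, where H(x) = int_0^x u^2.  As u is odd and P-periodic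
   (P = 2 T0), H(x + P) = H(x) + beta with beta > 0, so w(x + P) = w(x) + beta u(x): every
   solution c1 u + c2 w drifts by c2 beta u over a period, and a bounded or periodic solution has
   c2 = 0 (the solutions are exactly these combinations by an energy/Gronwall uniqueness argument).
   Since L_-(x u) = -2 u', the function V = -x u / 2 + P / (2 beta) w solves L_- V = u' with no
   drift; it is even, and the difference of two even periodic solutions is an even multiple of the
   odd function u, hence 0.  On the elliptic side, am' = sqrt(1 - k^2 sin^2 am) yields the
   equation for u0, and since sn has no zero in (0, F(pi, k)) the positive periods of u0 are
   bounded away from 0, so their infimum 2 T0 is itself a period. *)

Lemma is_derive_eq (f : R -> R) (x a b : R) : is_derive f x a -> a = b -> is_derive f x b.
Proof. intros Hf <-; exact Hf. Qed.

(* Coquelicot's rules are stated over abstract normed modules and do not unify with [Rplus],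
   [Rmult], ... directly; these are their instances on [R]. *)
Lemma is_derive_Rplus (f g : R -> R) (x a b : R) :
  is_derive f x a -> is_derive g x b -> is_derive (fun t => f t + g t) x (a + b).
Proof. intros; apply (is_derive_plus f g); auto. Qed.

Lemma is_derive_Rminus (f g : R -> R) (x a b : R) :
  is_derive f x a -> is_derive g x b -> is_derive (fun t => f t - g t) x (a - b).
Proof. intros; apply (is_derive_minus f g); auto. Qed.

Lemma is_derive_Ropp (f : R -> R) (x a : R) :
  is_derive f x a -> is_derive (fun t => - f t) x (- a).
Proof. intros; apply (is_derive_opp f); auto. Qed.

Lemma is_derive_Rmult (f g : R -> R) (x a b : R) :
  is_derive f x a -> is_derive g x b -> is_derive (fun t => f t * g t) x (a * g x + f x * b).
Proof. intros; apply (is_derive_mult f g); auto; intros; apply Rmult_comm. Qed.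

Lemma is_derive_Rid (x : R) : is_derive (fun t => t) x 1.
Proof. exact (is_derive_id (K := R_AbsRing) x). Qed.

Lemma is_derive_comp_R (f h : R -> R) (x a b : R) :
  is_derive f (h x) a -> is_derive h x b -> is_derive (fun t => f (h t)) x (b * a).
Proof. intros; apply (is_derive_comp f h); auto. Qed.

Lemma is_derive_scale_arg (f : R -> R) (x s a : R) :
  is_derive f (x * s) a -> is_derive (fun t => f (t * s)) x (s * a).
Proof.
  intros Hf; eapply is_derive_eq.
  - apply (is_derive_comp_R f (fun t => t * s)); [exact Hf | auto_derive; reflexivity].
  - ring.
Qed.

Lemma is_derive_shift (f : R -> R) (x c a : R) :
  is_derive f (x + c) a -> is_derive (fun t => f (t + c)) x a.
Proof.
  intros Hf; eapply is_derive_eq.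
  - apply (is_derive_comp_R f (fun t => t + c)); [exact Hf | auto_derive; reflexivity].
  - ring.
Qed.

Lemma is_derive_reflect (f : R -> R) (x a : R) :
  is_derive f (- x) a -> is_derive (fun t => f (- t)) x (- a).
Proof.
  intros Hf; eapply is_derive_eq.
  - apply (is_derive_comp_R f Ropp); [exact Hf | auto_derive; reflexivity].
  - ring.
Qed.

Lemma is_derive_unique_R (f : R -> R) (x a b : R) : is_derive f x a -> is_derive f x b -> a = b.
Proof. intros Ha Hb; apply is_derive_unique in Ha; apply is_derive_unique in Hb; congruence. Qed.

Lemma is_derive_nonneg_le (f f' : R -> R) :
  (forall x, is_derive f x (f' x)) -> (forall x, 0 <= f' x) ->
  forall a b, a <= b -> f a <= f b.
Proof.
  intros Hd Hpos a b Hab.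
  destruct (Req_dec a b) as [->|Hne]; [lra|].
  destruct (MVT_cor2 f f' a b) as [c [Hc _]]; [lra | intros c _; apply is_derive_Reals, Hd |].
  pose proof (Hpos c); nra.
Qed.

Lemma is_derive_0_const (f : R -> R) :
  (forall x, is_derive f x 0) -> forall a b, f a = f b.
Proof.
  intros Hd.
  assert (Hle : forall a b, a <= b -> f a = f b).
  { intros a b Hab.
    destruct (Req_dec a b) as [->|Hne]; [reflexivity|].
    destruct (MVT_cor2 f (fun _ => 0) a b) as [c [Hc _]];
      [lra | intros c _; apply is_derive_Reals, Hd | lra]. }
  intros a b; destruct (Rle_dec a b); [|symmetry]; apply Hle; lra.
Qed.

Lemma is_derive_pos_right (f : R -> R) (x l : R) :
  is_derive f x l -> 0 < l -> forall d, 0 < d -> exists h, 0 < h < d /\ f x < f (x + h).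
Proof.
  intros Hd Hl d Hdp; apply is_derive_Reals in Hd.
  destruct (Hd l Hl) as [del Hdel].
  set (h := Rmin d del / 2).
  assert (Hm : 0 < Rmin d del <= d /\ Rmin d del <= del)
    by (repeat split; [apply Rmin_pos; [lra | apply cond_pos] | apply Rmin_l | apply Rmin_r]).
  assert (Hh : Rabs ((f (x + h) - f x) / h - l) < l)
    by (apply Hdel; unfold h; [lra | rewrite Rabs_right; lra]).
  apply Rabs_def2 in Hh.
  exists h; split; [unfold h; lra|].
  assert (Hq : 0 < (f (x + h) - f x) / h * h) by (apply Rmult_lt_0_compat; unfold h in *; lra).
  field_simplify in Hq; unfold h in *; lra.
Qed.

Lemma is_derive_RInt_0 (f : R -> R) :
  (forall x, continuous f x) -> forall x, is_derive (fun y => RInt f 0 y) x (f x).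
Proof.
  intros Hc x; apply (is_derive_RInt f _ 0); [| apply Hc].
  apply filter_forall; intros y; apply (RInt_correct f), ex_RInt_continuous; intros; apply Hc.
Qed.

Lemma antiderivative_shift (F f : R -> R) (c : R) :
  (forall x, is_derive F x (f x)) -> (forall x, f (x + c) = f x) ->
  forall x, F (x + c) = F x + (F c - F 0).
Proof.
  intros HF Hf x.
  assert (Hconst : forall a b, F (a + c) - F a = F (b + c) - F b).
  { apply (is_derive_0_const (fun y => F (y + c) - F y)); intros y; eapply is_derive_eq;
      [apply is_derive_Rminus; [apply is_derive_shift, HF | apply HF] | rewrite Hf; ring]. }
  specialize (Hconst x 0); rewrite Rplus_0_l in Hconst; lra.
Qed.

Lemma antiderivative_odd (F f : R -> R) :
  (forall x, is_derive F x (f x)) -> (forall x, f (- x) = f x) -> F 0 = 0 ->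
  forall x, F (- x) = - F x.
Proof.
  intros HF Hf HF0 x.
  assert (Hconst : forall a b, F (- a) + F a = F (- b) + F b).
  { apply (is_derive_0_const (fun y => F (- y) + F y)); intros y; eapply is_derive_eq;
      [apply is_derive_Rplus; [apply is_derive_reflect, HF | apply HF] | rewrite Hf; ring]. }
  specialize (Hconst x 0); rewrite Ropp_0, HF0 in Hconst; lra.
Qed.

Lemma derive_periodic (f f1 : R -> R) (c : R) :
  (forall x, is_derive f x (f1 x)) -> (forall x, f (x + c) = f x) ->
  forall x, f1 (x + c) = f1 x.
Proof.
  intros Hf Hper x.
  apply (is_derive_unique_R f x); [| apply Hf].
  apply (is_derive_ext (fun t => f (t + c))); [apply Hper | apply is_derive_shift, Hf].
Qed.

Lemma derive_odd_even (f f1 : R -> R) :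
  (forall x, is_derive f x (f1 x)) -> (forall x, f (- x) = - f x) ->
  forall x, f1 (- x) = f1 x.
Proof.
  intros Hf Hodd x.
  assert (Hopp : - f1 (- x) = - f1 x).
  { apply (is_derive_unique_R (fun t => f (- t)) x); [apply is_derive_reflect, Hf|].
    apply (is_derive_ext (fun t => - f t)); [intros t; symmetry; apply Hodd|].
    apply is_derive_Ropp, Hf. }
  lra.
Qed.

Lemma gronwall_zero (e e1 : R -> R) (K : R) :
  (forall x, is_derive e x (e1 x)) -> (forall x, 0 <= e x) ->
  (forall x, Rabs (e1 x) <= K * e x) -> e 0 = 0 -> forall x, e x = 0.
Proof.
  intros He Hpos Hbound He0 x.
  assert (Hexp : forall c t, is_derive (fun s => exp (c * s)) t (c * exp (c * t)))
    by (intros c t; auto_derive; [exact I | ring]).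
  assert (Hsign : forall t, - (K * e t) <= e1 t <= K * e t)
    by (intros t; apply Rabs_le_between, Hbound).
  pose proof (Hpos x) as Hx0.
  destruct (Rle_dec 0 x) as [Hx | Hx].
  - assert (Hdecr : forall a b, a <= b -> - (e a * exp (- K * a)) <= - (e b * exp (- K * b))).
    { apply (is_derive_nonneg_le (fun t => - (e t * exp (- K * t)))
                                 (fun t => (K * e t - e1 t) * exp (- K * t))).
      - intros t; eapply is_derive_eq;
          [apply is_derive_Ropp, is_derive_Rmult; [apply He | apply Hexp] | cbv beta; ring].
      - intros t; pose proof (exp_pos (- K * t)); pose proof (Hsign t); nra. }
    specialize (Hdecr 0 x Hx); rewrite He0 in Hdecr.
    pose proof (exp_pos (- K * x)); nra.
  - assert (Hincr : forall a b, a <= b -> e a * exp (K * a) <= e b * exp (K * b)).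
    { apply (is_derive_nonneg_le (fun t => e t * exp (K * t))
                                 (fun t => (e1 t + K * e t) * exp (K * t))).
      - intros t; eapply is_derive_eq;
          [apply is_derive_Rmult; [apply He | apply Hexp] | cbv beta; ring].
      - intros t; pose proof (exp_pos (K * t)); pose proof (Hsign t); nra. }
    specialize (Hincr x 0 ltac:(lra)); rewrite He0 in Hincr.
    pose proof (exp_pos (K * x)); nra.
Qed.

Lemma linear_ode2_zero (a z z1 z2 : R -> R) (M : R) :
  (forall x, Rabs (a x) <= M) ->
  (forall x, is_derive z x (z1 x)) -> (forall x, is_derive z1 x (z2 x)) ->
  (forall x, z2 x = a x * z x) -> z 0 = 0 -> z1 0 = 0 -> forall x, z x = 0.
Proof.
  intros Ha Hz Hz1 Hode Hz0 Hz10 x.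
  assert (Henergy := gronwall_zero (fun t => z t ^ 2 + z1 t ^ 2)
                       (fun t => 2 * z t * z1 t * (1 + a t)) (1 + M)).
  enough (Hx : z x ^ 2 + z1 x ^ 2 = 0) by nra.
  apply Henergy; clear x.
  - intros t; eapply is_derive_eq.
    + apply is_derive_Rplus; apply (is_derive_pow _ 2); [apply Hz | apply Hz1].
    + rewrite Hode; simpl; ring.
  - intros t; nra.
  - intros t.
    assert (Hat : Rabs (1 + a t) <= 1 + M)
      by (eapply Rle_trans; [apply Rabs_triang | rewrite Rabs_R1; pose proof (Ha t); lra]).
    rewrite !Rabs_mult, (Rabs_right 2), <- (pow2_abs (z t)), <- (pow2_abs (z1 t)) by lra.
    set (A := Rabs (z t)); set (B := Rabs (z1 t)); set (C := Rabs (1 + a t)) in *.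
    assert (0 <= C) by apply Rabs_pos.
    (* [(1 + M) (A^2 + B^2) - 2 A B C = (1 + M - C) (A^2 + B^2) + C (A - B)^2] *)
    assert (0 <= (1 + M - C) * (A ^ 2 + B ^ 2)) by (apply Rmult_le_pos; nra).
    assert (0 <= C * (A - B) ^ 2) by (apply Rmult_le_pos; [assumption | apply pow2_ge_0]).
    nra.
  - rewrite Hz0, Hz10; ring.
Qed.

Lemma bounded_drift_zero (f g : R -> R) (P : R) :
  bounded_fun f -> (forall x, g (x + P) = g x) -> (forall x, f (x + P) = f x + g x) ->
  forall x, g x = 0.
Proof.
  intros [M HM] Hg Hf x.
  assert (Hiter : forall n : nat, f (x + INR n * P) = f x + INR n * g x /\ g (x + INR n * P) = g x).
  { induction n as [|n [IHf IHg]]; [simpl; rewrite Rmult_0_l, Rplus_0_r; split; ring|].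
    rewrite S_INR; replace (x + (INR n + 1) * P) with (x + INR n * P + P) by ring.
    rewrite Hf, Hg, IHf, IHg; split; ring. }
  destruct (Req_dec (g x) 0) as [|Hne]; [assumption|exfalso].
  destruct (INR_archimed (Rabs (g x)) (2 * M)) as [n Hn]; [apply Rabs_pos_lt, Hne|].
  destruct (Hiter n) as [Hfn _].
  pose proof (HM x) as Hx; pose proof (HM (x + INR n * P)) as Hxn; rewrite Hfn in Hxn.
  pose proof (Rabs_triang (f x + INR n * g x) (- f x)) as Htri.
  replace (f x + INR n * g x + - f x) with (INR n * g x) in Htri by ring.
  rewrite Rabs_mult, (Rabs_right (INR n)), Rabs_Ropp in Htri by apply Rle_ge, pos_INR.
  lra.
Qed.

Lemma glb_periods_is_period (f : R -> R) (d p0 : R) :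
  0 < d -> 0 < p0 -> is_period f p0 ->
  (forall p, 0 < p -> is_period f p -> d <= p) ->
  0 < real (Glb_Rbar (fun p => 0 < p /\ is_period f p)) /\
  is_period f (real (Glb_Rbar (fun p => 0 < p /\ is_period f p))).
Proof.
  intros Hd Hp0 Hf0 Hsep.
  set (S := fun p => 0 < p /\ is_period f p).
  destruct (Glb_Rbar_correct S) as [Hlb Hglb].
  assert (Hle : Rbar_le d (Glb_Rbar S)) by (apply Hglb; intros p [Hp Hpp]; apply Hsep; auto).
  pose proof (Hlb p0 (conj Hp0 Hf0)) as Hr0.
  destruct (Glb_Rbar S) as [r| |]; simpl in Hle, Hr0 |- *; try contradiction.
  (* two periods in [r, r + d) would differ by a positive period smaller than d *)
  assert (Hbelow : forall b, r < b -> exists p, S p /\ p < b).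
  { intros b Hb; apply NNPP; intros Hno.
    assert (Rbar_le b r) by (apply Hglb; intros p Sp; simpl; apply Rnot_lt_le; intros Hlt; eauto).
    simpl in *; lra. }
  apply NNPP; intros Hnot.
  destruct (Hbelow (r + d)) as [p1 [Sp1 Hp1]]; [lra|].
  assert (Hr1 : r < p1).
  { destruct (Rle_lt_or_eq_dec r p1) as [|<-]; [apply (Hlb p1 Sp1) | assumption | contradiction]. }
  destruct (Hbelow p1 Hr1) as [p2 [Sp2 Hp2]].
  pose proof (Hlb p2 Sp2) as Hr2; simpl in Hr2.
  assert (Hdiff : is_period f (p1 - p2)).
  { intros y; rewrite <- (proj2 Sp2 (y + (p1 - p2))), <- (proj2 Sp1 y); f_equal; ring. }
  pose proof (Hsep (p1 - p2) ltac:(lra) Hdiff); lra.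
Qed.

(* [Lminus_solves E v f] unfolds to [exists v1 v2, Lminus_sol (u0 E) v v1 v2 f]. *)
Definition Lminus_sol (u z z1 z2 f : R -> R) : Prop :=
  (forall x, is_derive z x (z1 x)) /\ (forall x, is_derive z1 x (z2 x)) /\
  (forall x, - z2 x + (u x ^ 2 - 1) * z x = f x).

Lemma Lminus_sol_lin (u z z1 z2 f y y1 y2 g : R -> R) (a b : R) :
  Lminus_sol u z z1 z2 f -> Lminus_sol u y y1 y2 g ->
  Lminus_sol u (fun x => a * z x + b * y x) (fun x => a * z1 x + b * y1 x)
    (fun x => a * z2 x + b * y2 x) (fun x => a * f x + b * g x).
Proof.
  intros [Hz [Hz1 Lz]] [Hy [Hy1 Ly]]; split; [|split]; intros x.
  - apply is_derive_Rplus; apply is_derive_scal; auto.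
  - apply is_derive_Rplus; apply is_derive_scal; auto.
  - rewrite <- Lz, <- Ly; ring.
Qed.

Lemma Lminus_sol_rhs (u z z1 z2 f g : R -> R) :
  Lminus_sol u z z1 z2 f -> (forall x, f x = g x) -> Lminus_sol u z z1 z2 g.
Proof. intros [Hz [Hz1 Lz]] Hfg; split; [|split]; auto; intros x; rewrite Lz; auto. Qed.

Section PeriodicLminus.

Variables (u u1 : R -> R) (P : R).
Hypothesis u_deriv : forall x, is_derive u x (u1 x).
Hypothesis u1_deriv : forall x, is_derive u1 x ((u x ^ 2 - 1) * u x).
Hypothesis u_sq_le1 : forall x, u x ^ 2 <= 1.
Hypothesis u_odd : forall x, u (- x) = - u x.
Hypothesis P_pos : 0 < P.
Hypothesis u_periodic : forall x, u (x + P) = u x.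
Hypothesis u_nonzero : exists x0, u x0 <> 0.

Lemma Lminus_sol_u : Lminus_sol u u u1 (fun x => (u x ^ 2 - 1) * u x) (fun _ => 0).
Proof. split; [|split]; auto; intros x; ring. Qed.

Lemma Lminus_kernel_zero_data (z z1 z2 : R -> R) :
  Lminus_sol u z z1 z2 (fun _ => 0) -> z 0 = 0 -> z1 0 = 0 -> forall x, z x = 0.
Proof.
  intros [Hz [Hz1 Lz]].
  apply (linear_ode2_zero (fun x => u x ^ 2 - 1) z z1 z2 1); auto.
  - intros x; apply Rabs_le_between; pose proof (u_sq_le1 x); pose proof (pow2_ge_0 (u x)); lra.
  - intros x; specialize (Lz x); lra.
Qed.

Lemma u_0 : u 0 = 0.
Proof. pose proof (u_odd 0) as H0; rewrite Ropp_0 in H0; lra. Qed.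

Lemma u1_0_neq0 : u1 0 <> 0.
Proof.
  intros Hu1; destruct u_nonzero as [x0 Hx0]; apply Hx0.
  exact (Lminus_kernel_zero_data u u1 _ Lminus_sol_u u_0 Hu1 x0).
Qed.

Lemma u1_even x : u1 (- x) = u1 x.
Proof. exact (derive_odd_even u u1 u_deriv u_odd x). Qed.

Definition int_u2 (x : R) : R := RInt (fun t => u t ^ 2) 0 x.

Lemma int_u2_deriv x : is_derive int_u2 x (u x ^ 2).
Proof.
  apply (is_derive_RInt_0 (fun t => u t ^ 2)); intros t.
  apply (ex_derive_continuous (fun t => u t ^ 2)); eexists; apply (is_derive_pow u 2), u_deriv.
Qed.

Lemma int_u2_0 : int_u2 0 = 0.
Proof. unfold int_u2; rewrite RInt_point; reflexivity. Qed.

Definition int_u2_P : R := int_u2 P.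

Lemma int_u2_shift x : int_u2 (x + P) = int_u2 x + int_u2_P.
Proof.
  assert (Hu2 : forall t, u (t + P) ^ 2 = u t ^ 2) by (intros t; rewrite u_periodic; reflexivity).
  rewrite (antiderivative_shift int_u2 (fun t => u t ^ 2) P int_u2_deriv Hu2), int_u2_0.
  unfold int_u2_P; ring.
Qed.

Lemma int_u2_odd x : int_u2 (- x) = - int_u2 x.
Proof.
  apply (antiderivative_odd int_u2 (fun t => u t ^ 2) int_u2_deriv), int_u2_0.
  intros t; rewrite u_odd; ring.
Qed.

Lemma int_u2_P_pos : 0 < int_u2_P.
Proof.
  destruct u_nonzero as [x0 Hx0].
  pose proof (int_u2_shift x0) as Hx0P.
  assert (Hu2 : 0 < u x0 ^ 2) by (apply pow2_gt_0, Hx0).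
  destruct (is_derive_pos_right int_u2 x0 _ (int_u2_deriv x0) Hu2 P P_pos) as [h [Hh Hlt]].
  assert (Hmono : int_u2 (x0 + h) <= int_u2 (x0 + P))
    by (apply (is_derive_nonneg_le int_u2 (fun t => u t ^ 2) int_u2_deriv);
        [intros; apply pow2_ge_0 | lra]).
  lra.
Qed.

Definition w x := u x * int_u2 x - 2 * u1 x.
Definition w1 x := u1 x * int_u2 x + 2 * u x - u x ^ 3.
Definition w2 x := (u x ^ 2 - 1) * u x * int_u2 x + 2 * (1 - u x ^ 2) * u1 x.

Lemma Lminus_sol_w : Lminus_sol u w w1 w2 (fun _ => 0).
Proof.
  split; [|split]; intros x; unfold w, w1, w2.
  - eapply is_derive_eq.
    + apply is_derive_Rminus; [apply is_derive_Rmult; [apply u_deriv | apply int_u2_deriv]|].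
      apply is_derive_scal, u1_deriv.
    + simpl; ring.
  - eapply is_derive_eq.
    + apply is_derive_Rminus; [apply is_derive_Rplus|].
      * apply is_derive_Rmult; [apply u1_deriv | apply int_u2_deriv].
      * apply is_derive_scal, u_deriv.
      * apply (is_derive_pow u 3), u_deriv.
    + simpl; ring.
  - ring.
Qed.

Lemma w_shift x : w (x + P) = w x + int_u2_P * u x.
Proof.
  unfold w; rewrite u_periodic, int_u2_shift, (derive_periodic u u1 P u_deriv u_periodic); ring.
Qed.

Lemma Lminus_kernel (z z1 z2 : R -> R) :
  Lminus_sol u z z1 z2 (fun _ => 0) ->
  forall x, z x = z1 0 / u1 0 * u x - z 0 / (2 * u1 0) * w x.
Proof.
  intros Hsol.
  set (c1 := z1 0 / u1 0); set (c2 := - (z 0 / (2 * u1 0))).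
  assert (Hcomb := Lminus_sol_lin u _ _ _ _ _ _ _ _ 1 (-1) Hsol
                     (Lminus_sol_lin u _ _ _ _ _ _ _ _ c1 c2 Lminus_sol_u Lminus_sol_w)).
  apply Lminus_sol_rhs with (g := fun _ => 0) in Hcomb; [| intros; ring].
  assert (Hu1 := u1_0_neq0).
  assert (Hw0 : w 0 = - 2 * u1 0) by (unfold w; rewrite u_0, int_u2_0; ring).
  assert (Hw1 : w1 0 = 0) by (unfold w1; rewrite u_0, int_u2_0; ring).
  assert (Hzero := Lminus_kernel_zero_data _ _ _ Hcomb); cbv beta in Hzero.
  rewrite u_0, Hw0, Hw1 in Hzero.
  intros x.
  specialize (Hzero ltac:(unfold c2; field; exact Hu1) ltac:(unfold c1; field; exact Hu1) x).
  unfold c1, c2 in *; lra.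
Qed.

Lemma Lminus_kernel_drift (z z1 z2 : R -> R) :
  Lminus_sol u z z1 z2 (fun _ => 0) ->
  forall x, z (x + P) = z x - z 0 / (2 * u1 0) * int_u2_P * u x.
Proof.
  intros Hsol x.
  rewrite (Lminus_kernel _ _ _ Hsol (x + P)), (Lminus_kernel _ _ _ Hsol x), u_periodic, w_shift.
  ring.
Qed.

Lemma Lminus_kernel_no_drift (z z1 z2 : R -> R) :
  Lminus_sol u z z1 z2 (fun _ => 0) -> (forall x, z (x + P) = z x) ->
  forall x, z x = z1 0 / u1 0 * u x.
Proof.
  intros Hsol Hper x.
  destruct u_nonzero as [x0 Hux0].
  pose proof (Hper x0) as Hx0; rewrite (Lminus_kernel_drift _ _ _ Hsol) in Hx0.
  assert (Hc : z 0 / (2 * u1 0) = 0).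
  { assert (Hprod : z 0 / (2 * u1 0) * int_u2_P * u x0 = 0) by lra.
    pose proof int_u2_P_pos.
    apply Rmult_integral in Hprod as [Hprod | Hu]; [| contradiction].
    apply Rmult_integral in Hprod as [Hc | Hb]; [exact Hc | lra]. }
  rewrite (Lminus_kernel _ _ _ Hsol x), Hc; ring.
Qed.

Lemma Lminus_kernel_bounded (z z1 z2 : R -> R) :
  bounded_fun z -> Lminus_sol u z z1 z2 (fun _ => 0) ->
  exists C, forall x, z x = C * u x.
Proof.
  intros Hbnd Hsol; exists (z1 0 / u1 0).
  apply (Lminus_kernel_no_drift _ _ _ Hsol).
  set (c := z 0 / (2 * u1 0)).
  assert (Hdrift : forall x, z (x + P) = z x + - c * int_u2_P * u x)
    by (intros x; rewrite (Lminus_kernel_drift _ _ _ Hsol); unfold c; ring).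
  assert (Hg : forall x, - c * int_u2_P * u x = 0).
  { apply (bounded_drift_zero z (fun x => - c * int_u2_P * u x) P Hbnd); [|exact Hdrift].
    intros x; rewrite u_periodic; reflexivity. }
  intros x; rewrite Hdrift, Hg; ring.
Qed.

Lemma Lminus_sol_xu :
  Lminus_sol u (fun x => x * u x) (fun x => u x + x * u1 x)
    (fun x => 2 * u1 x + x * ((u x ^ 2 - 1) * u x)) (fun x => - 2 * u1 x).
Proof.
  split; [|split]; intros x.
  - eapply is_derive_eq;
      [apply is_derive_Rmult; [apply is_derive_Rid | apply u_deriv] | simpl; ring].
  - eapply is_derive_eq.
    + apply is_derive_Rplus; [apply u_deriv|].
      apply is_derive_Rmult; [apply is_derive_Rid | apply u1_deriv].
    + simpl; ring.
  - ring.
Qed.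

(* [L_-(x u) = -2 u'], and the multiple of [w] cancels the drift [-P u / 2] of [-x u / 2]. *)
Definition V x := P / (2 * int_u2_P) * w x + - / 2 * (x * u x).

Lemma Lminus_sol_V : exists V1 V2, Lminus_sol u V V1 V2 u1.
Proof.
  do 2 eexists.
  apply (Lminus_sol_rhs _ _ _ _ _ _
           (Lminus_sol_lin _ _ _ _ _ _ _ _ _ (P / (2 * int_u2_P)) (- / 2)
              Lminus_sol_w Lminus_sol_xu)).
  intros x; pose proof int_u2_P_pos; field; lra.
Qed.

Lemma V_periodic x : V (x + P) = V x.
Proof. pose proof int_u2_P_pos; unfold V; rewrite w_shift, u_periodic; field; lra. Qed.

Lemma V_even x : V (- x) = V x.
Proof. unfold V, w; rewrite u_odd, int_u2_odd, u1_even; ring. Qed.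

Lemma Lminus_sol_V_unique (W W1 W2 : R -> R) :
  (forall x, W (- x) = W x) -> (forall x, W (x + P) = W x) ->
  Lminus_sol u W W1 W2 u1 -> forall x, W x = V x.
Proof.
  intros Weven Wper HW.
  destruct Lminus_sol_V as [V1 [V2 HV]].
  assert (Hz := Lminus_sol_lin _ _ _ _ _ _ _ _ _ 1 (-1) HW HV).
  apply Lminus_sol_rhs with (g := fun _ => 0) in Hz; [| intros; ring].
  assert (Hmult := Lminus_kernel_no_drift _ _ _ Hz).
  specialize (Hmult ltac:(intros x; cbv beta; rewrite Wper, V_periodic; reflexivity)).
  cbv beta in Hmult; destruct u_nonzero as [x0 Hux0].
  set (C := (1 * W1 0 + -1 * V1 0) / u1 0) in Hmult.
  assert (HC : C = 0).
  { pose proof (Hmult x0) as Hpos; pose proof (Hmult (- x0)) as Hneg.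
    rewrite Weven, V_even, u_odd in Hneg.
    assert (Hprod : C * u x0 = 0) by lra.
    apply Rmult_integral in Hprod as [HC | Hu]; [exact HC | contradiction]. }
  intros x; specialize (Hmult x); rewrite HC in Hmult; lra.
Qed.

End PeriodicLminus.

Section Amplitude.

Variable k : R.
Hypothesis k_sq_lt1 : k ^ 2 < 1.

Definition jacobi_delta (t : R) : R := sqrt (1 - k ^ 2 * sin t ^ 2).

Lemma jacobi_delta_radicand_pos t : 0 < 1 - k ^ 2 * sin t ^ 2.
Proof.
  pose proof (SIN_bound t); pose proof (pow2_ge_0 k).
  assert (sin t ^ 2 <= 1) by nra.
  nra.
Qed.

Lemma jacobi_delta_pos t : 0 < jacobi_delta t.
Proof. apply sqrt_lt_R0, jacobi_delta_radicand_pos. Qed.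

Lemma jacobi_delta_sq t : jacobi_delta t ^ 2 = 1 - k ^ 2 * sin t ^ 2.
Proof. apply pow2_sqrt, Rlt_le, jacobi_delta_radicand_pos. Qed.

Lemma jacobi_delta_le1 t : jacobi_delta t <= 1.
Proof.
  rewrite <- sqrt_1; apply sqrt_le_1_alt.
  pose proof (pow2_ge_0 k); pose proof (pow2_ge_0 (sin t)); nra.
Qed.

Lemma jacobi_delta_deriv t : is_derive jacobi_delta t (- k ^ 2 * sin t * cos t / jacobi_delta t).
Proof.
  pose proof (jacobi_delta_radicand_pos t); pose proof (jacobi_delta_pos t).
  unfold jacobi_delta in *; auto_derive; [lra|].
  replace (1 + - (k * (k * 1) * (sin t * (sin t * 1)))) with (1 - k ^ 2 * sin t ^ 2) by ring.
  field; lra.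
Qed.

Lemma ellipF_deriv phi : is_derive (ellipF k) phi (/ jacobi_delta phi).
Proof.
  apply (is_derive_RInt_0 (fun t => / jacobi_delta t)); intros t.
  apply (ex_derive_continuous (fun t => / jacobi_delta t)).
  eexists; apply is_derive_inv; [apply jacobi_delta_deriv | apply Rgt_not_eq, jacobi_delta_pos].
Qed.

Lemma ellipF_0 : ellipF k 0 = 0.
Proof. unfold ellipF; rewrite RInt_point; reflexivity. Qed.

Lemma ellipF_incr a b : a <= b -> b - a <= ellipF k b - ellipF k a.
Proof.
  intros Hab.
  enough (ellipF k a - a <= ellipF k b - b) by lra.
  apply (is_derive_nonneg_le (fun t => ellipF k t - t) (fun t => / jacobi_delta t - 1));
    [| | exact Hab].
  - intros t; apply is_derive_Rminus; [apply ellipF_deriv | apply is_derive_Rid].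
  - intros t; pose proof (jacobi_delta_pos t); pose proof (jacobi_delta_le1 t).
    enough (1 <= / jacobi_delta t) by lra.
    rewrite <- Rinv_1; apply Rinv_le_contravar; assumption.
Qed.

Lemma ellipF_inj a b : ellipF k a = ellipF k b -> a = b.
Proof.
  intros Hab; destruct (Rle_dec a b).
  - pose proof (ellipF_incr a b ltac:(lra)); lra.
  - pose proof (ellipF_incr b a ltac:(lra)); lra.
Qed.

Lemma ellipF_surj y : exists phi, ellipF k phi = y.
Proof.
  set (b := Rabs y).
  assert (Hy : - b <= y <= b) by apply Rabs_le_between, Rle_refl.
  pose proof (ellipF_incr 0 b ltac:(unfold b; pose proof (Rabs_pos y); lra)) as Hup.
  pose proof (ellipF_incr (- b) 0 ltac:(unfold b; pose proof (Rabs_pos y); lra)) as Hdown.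
  rewrite ellipF_0 in Hup, Hdown.
  destruct (IVT_gen_consistent (ellipF k) (- b) b y) as [phi [_ Hphi]]; [| | eauto].
  - intros x; apply (ex_derive_continuous (ellipF k)); eexists; apply ellipF_deriv.
  - rewrite Rmin_left, Rmax_right; lra.
Qed.

Lemma ellipF_odd phi : ellipF k (- phi) = - ellipF k phi.
Proof.
  apply (antiderivative_odd (ellipF k) (fun t => / jacobi_delta t) ellipF_deriv), ellipF_0.
  intros t; unfold jacobi_delta; rewrite sin_neg; do 3 f_equal; ring.
Qed.

Lemma ellipF_shift_PI phi : ellipF k (phi + PI) = ellipF k phi + ellipF k PI.
Proof.
  rewrite (antiderivative_shift (ellipF k) (fun t => / jacobi_delta t) PI ellipF_deriv), ellipF_0;
    [ring|].
  intros t; unfold jacobi_delta; rewrite neg_sin; do 3 f_equal; ring.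
Qed.

Lemma jacobi_am_spec x : ellipF k (jacobi_am k x) = x.
Proof. unfold jacobi_am; apply epsilon_spec, ellipF_surj. Qed.

Lemma jacobi_am_ellipF phi : jacobi_am k (ellipF k phi) = phi.
Proof. apply ellipF_inj, jacobi_am_spec. Qed.

Lemma jacobi_am_le x y : x <= y -> jacobi_am k x <= jacobi_am k y.
Proof.
  intros Hxy; apply Rnot_lt_le; intros Hlt.
  pose proof (ellipF_incr _ _ (Rlt_le _ _ Hlt)) as Hincr; rewrite !jacobi_am_spec in Hincr; lra.
Qed.

Lemma jacobi_am_lipschitz x y : Rabs (jacobi_am k x - jacobi_am k y) <= Rabs (x - y).
Proof.
  destruct (Rle_dec x y) as [Hxy | Hxy].
  - pose proof (ellipF_incr _ _ (jacobi_am_le x y Hxy)) as Hincr.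
    pose proof (jacobi_am_le x y Hxy).
    rewrite !jacobi_am_spec in Hincr; rewrite !Rabs_left1; lra.
  - pose proof (ellipF_incr _ _ (jacobi_am_le y x ltac:(lra))) as Hincr.
    pose proof (jacobi_am_le y x ltac:(lra)).
    rewrite !jacobi_am_spec in Hincr; rewrite !Rabs_right; lra.
Qed.

Lemma jacobi_am_deriv x : is_derive (jacobi_am k) x (jacobi_delta (jacobi_am k x)).
Proof.
  apply is_derive_Reals.
  assert (HF : forall a, jacobi_am k (x - 1) <= a <= jacobi_am k (x + 1) ->
                        derivable_pt (ellipF k) a)
    by (intros a _; exists (/ jacobi_delta a); apply is_derive_Reals, ellipF_deriv).
  assert (Hx : jacobi_am k (x - 1) <= jacobi_am k x <= jacobi_am k (x + 1))
    by (split; apply jacobi_am_le; lra).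
  assert (Hcont : continuity_pt (jacobi_am k) x).
  { intros eps Heps; exists eps; split; [exact Heps|].
    intros y [_ Hy]; simpl in *; unfold R_dist in *.
    pose proof (jacobi_am_lipschitz y x); lra. }
  assert (HF' : derive_pt (ellipF k) (jacobi_am k x) (HF _ Hx) = / jacobi_delta (jacobi_am k x))
    by (apply derive_pt_eq_0, is_derive_Reals, ellipF_deriv).
  pose proof (jacobi_delta_pos (jacobi_am k x)).
  assert (Hinv := Ranalysis5.derivable_pt_lim_recip_interv (ellipF k) (jacobi_am k)
                    (x - 1) (x + 1) x HF Hcont ltac:(lra) ltac:(lra) Hx).
  rewrite HF' in Hinv.
  replace (jacobi_delta (jacobi_am k x)) with (1 / / jacobi_delta (jacobi_am k x)) by (field; lra).
  apply Hinv; [intros y _; apply jacobi_am_spec |].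
  apply Rgt_not_eq, Rinv_0_lt_compat; lra.
Qed.

Lemma jacobi_am_odd x : jacobi_am k (- x) = - jacobi_am k x.
Proof. apply ellipF_inj; rewrite ellipF_odd, !jacobi_am_spec; reflexivity. Qed.

Lemma jacobi_am_shift x : jacobi_am k (x + ellipF k PI) = jacobi_am k x + PI.
Proof. apply ellipF_inj; rewrite ellipF_shift_PI, !jacobi_am_spec; reflexivity. Qed.

Definition jacobi_cn_dn (x : R) : R := cos (jacobi_am k x) * jacobi_delta (jacobi_am k x).

Lemma jacobi_sn_deriv x : is_derive (fun y => jacobi_sn y k) x (jacobi_cn_dn x).
Proof.
  unfold jacobi_sn, jacobi_cn_dn; eapply is_derive_eq.
  - apply (is_derive_comp_R sin (jacobi_am k)); [apply is_derive_sin | apply jacobi_am_deriv].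
  - ring.
Qed.

Lemma jacobi_cn_dn_deriv x :
  is_derive jacobi_cn_dn x (- (1 + k ^ 2) * jacobi_sn x k + 2 * k ^ 2 * jacobi_sn x k ^ 3).
Proof.
  unfold jacobi_cn_dn; eapply is_derive_eq.
  - apply is_derive_Rmult; apply is_derive_comp_R;
      [apply is_derive_cos | apply jacobi_am_deriv
      |apply jacobi_delta_deriv | apply jacobi_am_deriv].
  - unfold jacobi_sn.
    set (phi := jacobi_am k x).
    pose proof (jacobi_delta_pos phi); pose proof (jacobi_delta_sq phi); pose proof (sin2_cos2 phi).
    unfold Rsqr in *.
    transitivity (- sin phi * jacobi_delta phi ^ 2 - k ^ 2 * sin phi * cos phi ^ 2); [field; lra|].
    replace (cos phi ^ 2) with (1 - sin phi ^ 2) by lra.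
    rewrite jacobi_delta_sq; ring.
Qed.

Lemma jacobi_sn_odd x : jacobi_sn (- x) k = - jacobi_sn x k.
Proof. unfold jacobi_sn; rewrite jacobi_am_odd, sin_neg; reflexivity. Qed.

Lemma jacobi_sn_antiperiodic x : jacobi_sn (x + ellipF k PI) k = - jacobi_sn x k.
Proof. unfold jacobi_sn; rewrite jacobi_am_shift, neg_sin; reflexivity. Qed.

Lemma jacobi_sn_first_zero x : 0 < x -> jacobi_sn x k = 0 -> ellipF k PI <= x.
Proof.
  intros Hx Hsn.
  assert (Ham : 0 < jacobi_am k x).
  { pose proof (jacobi_am_le 0 x ltac:(lra)) as Hle.
    rewrite <- ellipF_0, jacobi_am_ellipF in Hle.
    destruct (Rle_lt_or_eq_dec _ _ Hle) as [|Heq]; [assumption|].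
    pose proof (jacobi_am_spec x) as Hspec; rewrite <- Heq, ellipF_0 in Hspec; lra. }
  destruct (sin_eq_0_0 _ Hsn) as [n Hn].
  assert (Hn0 : (0 < n)%Z) by (apply lt_0_IZR; rewrite Hn in Ham; pose proof PI_RGT_0; nra).
  assert (Hn1 : 1 <= IZR n) by (apply IZR_le; lia).
  assert (HPI : PI <= jacobi_am k x) by (rewrite Hn; pose proof PI_RGT_0; nra).
  pose proof (ellipF_incr _ _ HPI) as Hincr; rewrite jacobi_am_spec in Hincr; lra.
Qed.

Lemma jacobi_sn_quarter : jacobi_sn (ellipF k (PI / 2)) k = 1.
Proof. unfold jacobi_sn; rewrite jacobi_am_ellipF; apply sin_PI2. Qed.

End Amplitude.

Section SnoidalWave.

Variable E : R.
Hypothesis hE : 0 < E < 1.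

Let a := sqrt (1 - E).
Let s := sqrt ((1 + E) / 2).

Let a_pos : 0 < a.
Proof. apply sqrt_lt_R0; lra. Qed.

Let s_pos : 0 < s.
Proof. apply sqrt_lt_R0; lra. Qed.

Let a_sq : a ^ 2 = 1 - E.
Proof. apply pow2_sqrt; lra. Qed.

Let s_sq : s ^ 2 = (1 + E) / 2.
Proof. apply pow2_sqrt; lra. Qed.

Lemma kmod_sq : kmod E ^ 2 = (1 - E) / (1 + E).
Proof. apply pow2_sqrt, Rlt_le, Rdiv_lt_0_compat; lra. Qed.

Lemma kmod_sq_lt1 : kmod E ^ 2 < 1.
Proof. rewrite kmod_sq; apply Rmult_lt_reg_r with (1 + E); [lra|]; field_simplify; lra. Qed.

Definition u0' (x : R) : R := a * s * jacobi_cn_dn (kmod E) (x * s).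

Lemma u0_deriv x : is_derive (u0 E) x (u0' x).
Proof.
  unfold u0, u0'; eapply is_derive_eq.
  - apply is_derive_scal, (is_derive_scale_arg (fun y => jacobi_sn y (kmod E))).
    apply jacobi_sn_deriv, kmod_sq_lt1.
  - fold a s; ring.
Qed.

Lemma u0'_deriv x : is_derive u0' x ((u0 E x ^ 2 - 1) * u0 E x).
Proof.
  unfold u0'; eapply is_derive_eq.
  - apply is_derive_scal, (is_derive_scale_arg (jacobi_cn_dn (kmod E))).
    apply jacobi_cn_dn_deriv, kmod_sq_lt1.
  - unfold u0; fold a s.
    set (S := jacobi_sn (x * s) (kmod E)).
    transitivity (a * s ^ 2 * (- (1 + kmod E ^ 2) * S + 2 * kmod E ^ 2 * S ^ 3)); [ring|].
    replace ((a * S) ^ 2) with (a ^ 2 * S ^ 2) by ring.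
    rewrite s_sq, a_sq, kmod_sq; field; lra.
Qed.

Lemma u0_sq_le1 x : u0 E x ^ 2 <= 1.
Proof.
  unfold u0; fold a s; unfold jacobi_sn.
  pose proof (SIN_bound (jacobi_am (kmod E) (x * s))).
  replace ((a * sin _) ^ 2) with (a ^ 2 * sin (jacobi_am (kmod E) (x * s)) ^ 2) by ring.
  rewrite a_sq; nra.
Qed.

Lemma u0_odd x : u0 E (- x) = - u0 E x.
Proof.
  unfold u0; replace (- x * _) with (- (x * sqrt ((1 + E) / 2))) by ring.
  rewrite jacobi_sn_odd by apply kmod_sq_lt1; ring.
Qed.

Lemma u0_period : is_period (u0 E) (2 * ellipF (kmod E) PI / s).
Proof.
  intros x; unfold u0; fold a s.
  replace ((x + 2 * ellipF (kmod E) PI / s) * s)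
    with (x * s + ellipF (kmod E) PI + ellipF (kmod E) PI) by (field; lra).
  rewrite !jacobi_sn_antiperiodic by apply kmod_sq_lt1; ring.
Qed.

Lemma u0_period_lb p : 0 < p -> is_period (u0 E) p -> ellipF (kmod E) PI / s <= p.
Proof.
  intros Hp Hper.
  assert (Hzero : u0 E p = 0).
  { rewrite <- (Rplus_0_l p), Hper.
    pose proof (u0_odd 0) as H0; rewrite Ropp_0 in H0; lra. }
  unfold u0 in Hzero; fold a s in Hzero.
  apply Rmult_integral in Hzero as [|Hsn]; [lra|].
  apply jacobi_sn_first_zero in Hsn; [| apply kmod_sq_lt1 | nra].
  apply Rmult_le_reg_r with s; [exact s_pos|].
  unfold Rdiv; rewrite Rmult_assoc, Rinv_l; lra.
Qed.

Lemma u0_quarter_neq0 : u0 E (ellipF (kmod E) (PI / 2) / s) <> 0.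
Proof.
  unfold u0; fold a s.
  replace (ellipF (kmod E) (PI / 2) / s * s) with (ellipF (kmod E) (PI / 2)) by (field; lra).
  rewrite jacobi_sn_quarter by apply kmod_sq_lt1; lra.
Qed.

Lemma T0_period : 0 < 2 * T0 E /\ is_period (u0 E) (2 * T0 E).
Proof.
  assert (HK : 0 < ellipF (kmod E) PI).
  { pose proof (ellipF_incr _ kmod_sq_lt1 0 PI (Rlt_le _ _ PI_RGT_0)) as Hincr.
    rewrite ellipF_0 in Hincr; pose proof PI_RGT_0; lra. }
  unfold T0; replace (2 * (_ / 2)) with (real (Glb_Rbar (fun p => 0 < p /\ is_period (u0 E) p)))
    by field.
  apply (glb_periods_is_period (u0 E) (ellipF (kmod E) PI / s) (2 * ellipF (kmod E) PI / s)).
  - apply Rdiv_lt_0_compat; lra.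
  - apply Rdiv_lt_0_compat; lra.
  - apply u0_period.
  - apply u0_period_lb.
Qed.

End SnoidalWave.

Theorem lemma5p2 (E : R) (hE : 0 < E < 1) :
  (forall v : R -> R,
     bounded_fun v -> Lminus_solves E v (fun _ => 0) ->
     exists C : R, forall x, v x = C * u0 E x)
  /\
  (exists V : R -> R,
     (even_fun V /\ is_period V (2 * T0 E) /\ Lminus_solves E V (Derive (u0 E)))
     /\ forall W : R -> R,
          even_fun W -> is_period W (2 * T0 E) -> Lminus_solves E W (Derive (u0 E)) ->
          forall x, W x = V x).
Proof.
  pose proof (u0_deriv E hE) as Hu; pose proof (u0'_deriv E hE) as Hu1.
  pose proof (u0_sq_le1 E hE) as Hle1; pose proof (u0_odd E hE) as Hodd.
  assert (Hx0 : exists x0, u0 E x0 <> 0) by (eexists; apply u0_quarter_neq0, hE).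
  destruct (T0_period E hE) as [HT Hper].
  assert (Hrhs : forall x, u0' E x = Derive (u0 E) x)
    by (intros x; symmetry; apply is_derive_unique, Hu).
  split.
  - intros v Hv [v1 [v2 Hsol]]; eapply Lminus_kernel_bounded; eauto.
  - exists (V (u0 E) (u0' E) (2 * T0 E)); split; [split; [|split]|].
    + intros x; eapply V_even; eauto.
    + intros x; eapply V_periodic; eauto.
    + destruct (Lminus_sol_V (u0 E) (u0' E) (2 * T0 E)) as [V1 [V2 HV]]; eauto.
      exists V1, V2; exact (Lminus_sol_rhs _ _ _ _ _ _ HV Hrhs).
    + intros W Weven Wper [W1 [W2 HW]]; eapply Lminus_sol_V_unique; eauto.
      apply (Lminus_sol_rhs _ _ _ _ _ _ HW); intros x; symmetry; apply Hrhs.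
Qed.
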